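(* Consider the problem $\min_{x\in\mathbb{R}^n} f(x):=F(x)+h(x)$, where $h:\mathbb{R}^n\to\mathbb{R}\cup\{+\infty\}$ is a proper closed convex function, $F:\mathbb{R}^n\to\mathbb{R}$ is lower semicontinuous (possibly nonconvex), $\mathrm{dom}\, f=\mathrm{dom}\, h$, and there is $f_\infty>-\infty$ with $f(x)\ge f_\infty$ for all $x\in\mathrm{dom}\, f$. Fix $q\in[0,2)$, $\rho>0$, $L>0$, $\delta\ge0$ and $\beta,\zeta\in[0,1)$, and set for all $k\ge0$ $$\delta_k=\frac{\delta}{(k+1)^{\frac{\beta(2-q)}{2}}},\qquad \alpha_k=\frac{1}{(L+q\rho)(k+1)^{\zeta}}.$$ Let $x_0\in\mathrm{dom}\, h$ and let $(x_k)_{k\ge0}$ be generated by $x_{k+1}=\mathrm{prox}_{\alpha_k h}(x_k-\alpha_k g_k)$, where $\mathrm{prox}_{\gamma h}(z):=\arg\min_{y\in\mathrm{dom}\, h}\{h(y)+\tfrac{1}{2\gamma}\|z-y\|^2\}$ and at each iteration $k$ the vector $g_k$ satisfies $$F(x)-\big(F(x_k)+\langle g_k,x-x_k\rangle\big)\le \frac{L}{2}\|x-x_k\|^2+\delta_k\|x-x_k\|^q\quad\text{for all } x\in\mathrm{dom}\, f.$$ Let $p_{j+1}:=-\frac{1}{\alpha_j}(x_{j+1}-x_j)-g_j\in\partial h(x_{j+1})$. Then for all $k\ge0$, $$\min_{j=0,\dots,k}\|g_j+p_{j+1}\|^2\le \frac{2(L+q\rho)(f(x_0)-f_\infty)}{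(1-\zeta)(k+1)^{1-\zeta}}+\frac{(2-q)(L+q\rho)\,\delta^{\frac{2}{2-q}}}{(1-\zeta)(1-\beta)\,\rho^{\frac{q}{2-q}}\,(k+1)^{\beta-\zeta}}.$$
   Context: $\|\cdot\|$ is the Euclidean norm and $\partial h$ the convex subdifferential of $h$. The condition on $g_k$ is the paper's ''inexact first-order $(\delta_k,L)$-oracle of degree $q$'' at $x_k$. *)

From mathcomp Require Import all_boot all_order all_algebra.
From mathcomp Require Import all_classical all_reals all_analysis.
Set Implicit Arguments. Unset Strict Implicit. Unset Printing Implicit Defensive.
Import Order.TTheory GRing.Theory Num.Theory.
Local Open Scope ring_scope.

Section Defs.
Variables (R : realType) (n : nat).
Local Notation V := 'rV[R]_n.

Definition dotv (u v : V) : R := \sum_(i < n) u ord0 i * v ord0 i.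
Definition enorm (u : V) : R := Num.sqrt (dotv u u).

Definition edom (h : V -> \bar R) : set V := [set x | (h x < +oo)%E].

Definition proper_fun (h : V -> \bar R) : Prop :=
  (forall x, (-oo < h x)%E) /\ exists x, (h x < +oo)%E.

(* closed = lower semicontinuous (closed epigraph) w.r.t. the Euclidean norm *)
Definition elsc (h : V -> \bar R) : Prop :=
  forall x (a : R), (a%:E < h x)%E ->
    exists2 e : R, 0 < e & forall y, enorm (y - x) < e -> (a%:E < h y)%E.

Definition lsc (F : V -> R) : Prop := elsc (fun x => (F x)%:E).

Definition convex_efun (h : V -> \bar R) : Prop :=
  forall x y (t : R), (h x < +oo)%E -> (h y < +oo)%E -> 0 <= t <= 1 ->
    (h (t *: x + (1 - t) *: y)%R <= t%:E * h x + (1 - t)%:E * h y)%E.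

Definition is_prox (h : V -> \bar R) (gamma : R) (z p : V) : Prop :=
  (h p < +oo)%E /\
  forall y, (h y < +oo)%E ->
    (h p + (1 / (2 * gamma) * enorm (z - p)%R ^+ 2)%R%:E
       <= h y + (1 / (2 * gamma) * enorm (z - y)%R ^+ 2)%R%:E)%E.
End Defs.

From mathcomp Require Import all_boot all_order all_algebra.
From mathcomp Require Import all_classical all_reals all_analysis.
From mathcomp Require Import ring lra.
Set Implicit Arguments. Unset Strict Implicit. Unset Printing Implicit Defensive.
Import Order.TTheory GRing.Theory Num.Theory.
Local Open Scope ring_scope.

(* The prox step makes (x_k - a_k g_k - x_(k+1)) / a_k a
   subgradient of h at x_(k+1).  Tested at y = x_k and added to the oracle
   inequality at y = x_(k+1), it gives a descent inequality whose error term
   delta_k t^q is absorbed by Young's inequality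
   delta t^q <= (q rho / 2) t^2 + C(delta)   (C = young_const below);
   since 1/a_k >= L + q rho this yields
     f(x_(k+1)) + (a_k / 2) ||g_k + p_(k+1)||^2 <= f(x_k) + C(delta_k).
   Telescoping bounds sum_j a_j ||g_j + p_(j+1)||^2 by
   2 (f(x_0) - f_inf) + 2 sum_j C(delta)/(j+1)^beta; the minimum is then
   bounded using sum_j a_j >= (k+1) a_k and, by concavity,
   sum_j (j+1)^-beta <= (k+1)^(1-beta) / (1-beta). *)

Section EuclideanSpace.
Variables (R : realType) (n : nat).
Implicit Types (u v w : 'rV[R]_n) (a : R).

Lemma dotvC u v : dotv u v = dotv v u.
Proof. by apply: eq_bigr => i _; rewrite mulrC. Qed.

Lemma dotvDl u v w : dotv (u + v) w = dotv u w + dotv v w.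
Proof. by rewrite /dotv -big_split; apply: eq_bigr => i _; rewrite mxE mulrDl. Qed.

Lemma dotvZl a u v : dotv (a *: u) v = a * dotv u v.
Proof. by rewrite /dotv mulr_sumr; apply: eq_bigr => i _; rewrite mxE mulrA. Qed.

Lemma dotvNl u v : dotv (- u) v = - dotv u v.
Proof. by rewrite -scaleN1r dotvZl mulN1r. Qed.

Lemma dotvBl u v w : dotv (u - v) w = dotv u w - dotv v w.
Proof. by rewrite dotvDl dotvNl. Qed.

Lemma dotvv_ge0 u : 0 <= dotv u u.
Proof. by apply: sumr_ge0 => i _; rewrite -expr2 sqr_ge0. Qed.

Lemma enorm_ge0 u : 0 <= enorm u.
Proof. exact: sqrtr_ge0. Qed.

Lemma enorm_sqr u : enorm u ^+ 2 = dotv u u.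
Proof. by rewrite sqr_sqrtr // dotvv_ge0. Qed.

Lemma enormZ_sqr a u : enorm (a *: u) ^+ 2 = a ^+ 2 * dotv u u.
Proof. by rewrite enorm_sqr dotvZl (dotvC u) dotvZl mulrA -expr2. Qed.

Lemma enorm_subZ_sqr a u v :
  enorm (u - a *: v) ^+ 2 = dotv u u - 2 * a * dotv u v + a ^+ 2 * dotv v v.
Proof.
rewrite enorm_sqr dotvBl dotvZl !(dotvC _ (u - _)) !dotvBl !dotvZl (dotvC v u).
by rewrite expr2; ring.
Qed.

End EuclideanSpace.

Section RealInequalities.
Variable R : realType.

Lemma le_of_forall_scaled_le (x y c : R) : 0 <= c ->
  (forall t, 0 < t <= 1 -> t * x <= t * y + t ^+ 2 * c) -> x <= y.
Proof.
move=> c0 Hxy; rewrite leNgt; apply/negP => yx.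
have e0 : 0 < x - y by rewrite subr_gt0.
have ec0 : 0 < x - y + c by rewrite ltr_wpDr.
(* t = (x - y) / (x - y + c) makes t * c strictly smaller than x - y *)
set t := (x - y) / (x - y + c).
have t0 : 0 < t by rewrite divr_gt0.
have t1 : t <= 1 by rewrite ler_pdivrMr // mul1r lerDl.
have tc : t * (x - y + c) = x - y by rewrite mulfVK // gt_eqF.
have := Hxy t; rewrite t0 t1 => /(_ isT).
rewrite expr2 -mulrA -mulrDr ler_pM2l // => Hle.
have : 0 < t * (x - y) by rewrite mulr_gt0.
nra.
Qed.

Lemma powR_amgm (x y w : R) : 0 <= x -> 0 <= y -> 0 <= w <= 1 ->
  x `^ w * y `^ (1 - w) <= w * x + (1 - w) * y.
Proof.
move=> x0 y0 /andP[w0 w1].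
have [->|wn0] := eqVneq w 0.
  by rewrite powRr0 subr0 powRr1 // !mul1r mul0r add0r.
have [->|wn1] := eqVneq w 1.
  by rewrite powRr1 // subrr powRr0 mulr1 mul1r mul0r addr0.
have wp : 0 < w by rewrite lt_neqAle eq_sym wn0.
have wq : 0 < 1 - w by rewrite subr_gt0 lt_neqAle wn1.
have := @conjugate_powR R (x `^ w) (y `^ (1 - w)) w^-1 (1 - w)^-1
  (powR_ge0 _ _) (powR_ge0 _ _).
rewrite -!powRrM !mulfV ?gt_eqF // !powRr1 // !invrK (mulrC w) (mulrC (1 - w)).
by apply; rewrite ?invr_gt0 // addrC subrK.
Qed.

Lemma powR_ge1 (a r : R) : 1 <= a -> 0 <= r -> 1 <= a `^ r.
Proof. by move=> a1 r0; have := ler_powR a1 r0; rewrite powRr0. Qed.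

Lemma powR_inv (x r : R) : 0 < x -> x^-1 `^ r = (x `^ r)^-1.
Proof.
move=> x0; rewrite -powR_inv1 ?ltW // -powRrM mulrC powRrM powR_inv1 //.
exact: powR_ge0.
Qed.

Lemma powR_div (x y r : R) : 0 <= x -> 0 < y -> (x / y) `^ r = x `^ r / y `^ r.
Proof. by move=> x0 y0; rewrite powRM ?powR_inv // invr_ge0 ltW. Qed.

Definition young_const (q rho d : R) : R :=
  (2 - q) / 2 * (d `^ (2 / (2 - q)) / rho `^ (q / (2 - q))).

Lemma young_const_ge0 (q rho d : R) : q < 2 -> 0 <= young_const q rho d.
Proof.
by move=> q2; rewrite mulr_ge0 ?divr_ge0 ?powR_ge0 ?invr_ge0 ?subr_ge0 ?ltW.
Qed.

Lemma young_powR (q rho d t : R) : 0 <= q < 2 -> 0 < rho -> 0 <= d -> 0 <= t ->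
  d * t `^ q <= q * rho / 2 * t ^+ 2 + young_const q rho d.
Proof.
move=> /andP[q0 q2] rho0 d0 t0.
have q2' : 0 < 2 - q by rewrite subr_gt0.
have rq : 0 < rho `^ (q / 2) by rewrite powR_gt0.
set Y := d `^ (2 / (2 - q)) / rho `^ (q / (2 - q)).
have X0 : 0 <= rho * t ^+ 2 by rewrite mulr_ge0 ?sqr_ge0 ?ltW.
have Y0 : 0 <= Y by rewrite divr_ge0 ?powR_ge0.
have w01 : 0 <= q / 2 <= 1 by rewrite divr_ge0 //= ler_pdivrMr //; lra.
have EX : (rho * t ^+ 2) `^ (q / 2) = rho `^ (q / 2) * t `^ q.
  rewrite powRM ?sqr_ge0 ?ltW // -(powR_mulrn 2 t0) -powRrM.
  by congr (_ * t `^ _); field.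
have EY : Y `^ (1 - q / 2) = d / rho `^ (q / 2).
  rewrite powR_div ?powR_ge0 ?powR_gt0 // -!powRrM.
  have -> : 2 / (2 - q) * (1 - q / 2) = 1 :> R by field; rewrite gt_eqF.
  have -> : q / (2 - q) * (1 - q / 2) = q / 2 :> R by field; rewrite gt_eqF.
  by rewrite powRr1.
have := powR_amgm X0 Y0 w01; rewrite EX EY.
have -> : rho `^ (q / 2) * t `^ q * (d / rho `^ (q / 2)) = d * t `^ q.
  by field; rewrite gt_eqF.
have -> : q / 2 * (rho * t ^+ 2) + (1 - q / 2) * Y
    = q * rho / 2 * t ^+ 2 + young_const q rho d by rewrite /young_const -/Y; field.
by apply.
Qed.

Lemma young_const_div (q rho d b s : R) : q < 2 -> 0 <= d -> 0 < s ->
  young_const q rho (d / s `^ (b * (2 - q) / 2)) = young_const q rho d / s `^ b.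
Proof.
move=> q2 d0 s0; have q2' : 0 < 2 - q by rewrite subr_gt0.
rewrite /young_const powR_div ?powR_gt0 // -powRrM.
have -> : b * (2 - q) / 2 * (2 / (2 - q)) = b by field; rewrite gt_eqF.
by rewrite [d `^ _ / _ / _]mulrAC mulrA.
Qed.

Lemma sum_inv_powR_le (b : R) (K : nat) : 0 <= b < 1 ->
  \sum_(j < K) (j.+1%:R `^ b)^-1 <= K%:R `^ (1 - b) / (1 - b).
Proof.
move=> /andP[b0 b1]; have b1' : 0 < 1 - b by rewrite subr_gt0.
elim: K => [|K IH]; first by rewrite big_ord0 divr_ge0 ?powR_ge0 ?ltW.
rewrite big_ord_recr /=; apply: le_trans (lerD IH (le_refl _)) _.
set A := K%:R `^ (1 - b); set P := K.+1%:R `^ b.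
have P0 : 0 < P by rewrite powR_gt0 // ltr0n.
have -> : K.+1%:R `^ (1 - b) = K.+1%:R / P.
  by rewrite powRB ?powRr1 // pnatr_eq0 implybT.
(* concavity of s |-> s^(1-b), via weighted AM-GM between K and K+1 *)
have AP : A * P <= (1 - b) * K%:R + b * K.+1%:R.
  have := @powR_amgm K%:R K.+1%:R (1 - b) (ler0n _ _) (ler0n _ _).
  have -> : 1 - (1 - b) = b by ring.
  by apply; rewrite ltW //=; lra.
rewrite -subr_ge0.
have -> : K.+1%:R / P / (1 - b) - (A / (1 - b) + P^-1) =
   (K.+1%:R - (A * P + (1 - b))) / (P * (1 - b)) by field; rewrite !gt_eqF.
apply: divr_ge0; last by rewrite mulr_ge0 ?ltW.
by rewrite subr_ge0; move: AP; rewrite -natr1; lra.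
Qed.

Lemma sum_inv_powR_ge (z : R) (K : nat) : 0 <= z ->
  K.+1%:R `^ (1 - z) <= \sum_(j < K.+1) (j.+1%:R `^ z)^-1.
Proof.
move=> z0; have Pz : 0 < K.+1%:R `^ z by rewrite powR_gt0 ?ltr0n.
rewrite powRB ?pnatr_eq0 ?implybT // powRr1 //.
have -> : K.+1%:R / K.+1%:R `^ z = \sum_(j < K.+1) (K.+1%:R `^ z)^-1.
  by rewrite sumr_const card_ord mulr_natl.
apply: ler_sum => j _; rewrite lef_pV2 ?posrE ?powR_gt0 ?ltr0n //.
by apply: ge0_ler_powR; rewrite ?nnegrE ?ler0n // ler_nat ltn_ord.
Qed.

Lemma sum_le_telescope (u a b : nat -> R) (K : nat) :
  (forall j, u j.+1 + a j <= u j + b j) ->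
  \sum_(j < K) a j <= u 0%N - u K + \sum_(j < K) b j.
Proof.
move=> step; elim: K => [|K IH]; first by rewrite !big_ord0 subrr addr0.
rewrite !big_ord_recr /=; have := step K; lra.
Qed.

Lemma bigmin_mul_sum_le (K : nat) (x0 : R) (m w : 'I_K -> R) :
  (forall j, 0 <= w j) ->
  \big[Order.min/x0]_(j < K) m j * \sum_(j < K) w j <= \sum_(j < K) w j * m j.
Proof.
move=> w0; rewrite mulr_sumr; apply: ler_sum => j _.
by rewrite mulrC ler_wpM2l // bigmin_le.
Qed.

End RealInequalities.

Section ProxSubgradient.
Variables (R : realType) (n : nat) (h : 'rV[R]_n -> \bar R).
Hypotheses (h_proper : proper_fun h) (h_convex : convex_efun h).

Lemma fineK_dom y : (h y < +oo)%E -> (fine (h y))%:E = h y.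
Proof. by move=> hy; rewrite fineK //; apply/fin_numPlt; rewrite h_proper.1 hy. Qed.

Lemma convex_efun_fine y p t : (h y < +oo)%E -> (h p < +oo)%E -> 0 <= t <= 1 ->
  (h (t *: y + (1 - t) *: p) < +oo)%E /\
  fine (h (t *: y + (1 - t) *: p)) <= t * fine (h y) + (1 - t) * fine (h p).
Proof.
move=> hy hp t01; have := h_convex hy hp t01.
rewrite -(fineK_dom hy) -(fineK_dom hp) -!EFinM -EFinD => hw.
have hw' := le_lt_trans hw (ltry _); split => //.
by rewrite -lee_fin (fineK_dom hw').
Qed.

Lemma is_prox_fine a z p y : is_prox h a z p -> (h y < +oo)%E ->
  fine (h p) + 1 / (2 * a) * enorm (z - p) ^+ 2
    <= fine (h y) + 1 / (2 * a) * enorm (z - y) ^+ 2.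
Proof.
by move=> [hp hmin] hy; rewrite -lee_fin !EFinD !fineK_dom //; exact: hmin.
Qed.

Lemma is_prox_subgradient a z p y : 0 < a -> is_prox h a z p -> (h y < +oo)%E ->
  fine (h p) <= fine (h y) - a^-1 * dotv (z - p) (y - p).
Proof.
move=> a0 hprox hy; have hp := hprox.1.
apply: (@le_of_forall_scaled_le _ _ _ (dotv (y - p) (y - p) / (2 * a))).
  by rewrite divr_ge0 ?dotvv_ge0 // mulr_ge0 // ltW.
(* test the prox inequality at the point t y + (1 - t) p of the segment *)
move=> t /andP[t0 t1]; have t01 : 0 <= t <= 1 by rewrite ltW.
have [hw hwle] := convex_efun_fine hy hp t01.
have := is_prox_fine hprox hw.
have -> : z - (t *: y + (1 - t) *: p) = z - p - t *: (y - p).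
  by apply/rowP => i; rewrite !mxE; ring.
rewrite enorm_subZ_sqr enorm_sqr; move: hwle.
by rewrite !div1r invfM; lra.
Qed.

End ProxSubgradient.

Section ProxGradientStep.
Variables (R : realType) (n : nat) (F : 'rV[R]_n -> R) (h : 'rV[R]_n -> \bar R).
Hypotheses (h_proper : proper_fun h) (h_convex : convex_efun h).
Variables (q rho L : R).
Hypotheses (q_range : 0 <= q < 2) (rho_gt0 : 0 < rho).

Lemma prox_grad_descent (a d : R) (x g x' : 'rV[R]_n) :
  0 < a -> a * (L + q * rho) <= 1 -> 0 <= d ->
  (h x < +oo)%E -> is_prox h a (x - a *: g) x' ->
  (forall y, (h y < +oo)%E ->
     F y - (F x + dotv g (y - x))
       <= L / 2 * enorm (y - x) ^+ 2 + d * enorm (y - x) `^ q) ->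
  F x' + fine (h x') + a / 2 * enorm (- a^-1 *: (x' - x)) ^+ 2
    <= F x + fine (h x) + young_const q rho d.
Proof.
move=> a0 aLq d0 hx hprox oracle; have hx' := hprox.1.
have sub := is_prox_subgradient h_proper h_convex a0 hprox hx.
have ora := oracle x' hx'.
have yng := young_powR q_range rho_gt0 d0 (enorm_ge0 (x' - x)).
move: sub ora yng.
have -> : x - a *: g - x' = - (a *: g + (x' - x)).
  by apply/rowP => i; rewrite !mxE; ring.
have -> : x - x' = - (x' - x) by rewrite opprB.
rewrite dotvNl dotvC dotvNl opprK dotvC dotvDl dotvZl enormZ_sqr sqrrN enorm_sqr.
set N := dotv (x' - x) (x' - x); set G := dotv g (x' - x).
have Lq : (L + q * rho) * N <= a^-1 * N.
  by rewrite ler_wpM2r ?dotvv_ge0 // -(ler_pM2l a0) divff ?gt_eqF.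
have -> : a / 2 * (a^-1 ^+ 2 * N) = a^-1 / 2 * N by field; rewrite gt_eqF.
rewrite mulrDr mulrA mulVf ?gt_eqF // mul1r; lra.
Qed.

End ProxGradientStep.

Section DescentRate.
Variables (R : realType) (c beta zeta f_inf Y : R) (fv m : nat -> R).
Hypotheses (c_gt0 : 0 < c) (beta_ge0 : 0 <= beta) (beta_lt1 : beta < 1)
  (zeta_ge0 : 0 <= zeta) (zeta_lt1 : zeta < 1) (Y_ge0 : 0 <= Y)
  (fv_ge : forall j, f_inf <= fv j) (m_ge0 : forall j, 0 <= m j).
Hypothesis descent : forall j,
  fv j.+1 + (c * j.+1%:R `^ zeta)^-1 / 2 * m j <= fv j + Y / j.+1%:R `^ beta.

Lemma descent_bigmin_sum (k : nat) :
  \big[Order.min/m 0%N]_(j < k.+1) m j * (k.+1%:R `^ (1 - zeta) / c)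
    <= 2 * (fv 0%N - f_inf) + 2 * Y * (k.+1%:R `^ (1 - beta) / (1 - beta)).
Proof.
set w := fun j : nat => (c * j.+1%:R `^ zeta)^-1.
have w_ge0 j : 0 <= w j by rewrite invr_ge0 mulr_ge0 ?powR_ge0 ?ltW.
have tele := sum_le_telescope k.+1 descent.
have sumY : \sum_(j < k.+1) Y / j.+1%:R `^ beta
    <= Y * (k.+1%:R `^ (1 - beta) / (1 - beta)).
  by rewrite -mulr_sumr; apply: ler_wpM2l => //; rewrite sum_inv_powR_le // beta_ge0.
have sumw : k.+1%:R `^ (1 - zeta) / c <= \sum_(j < k.+1) w j.
  rewrite /w; under eq_bigr do rewrite invfM.
  rewrite -mulr_sumr [_ / c]mulrC; apply: ler_wpM2l; first by rewrite invr_ge0 ltW.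
  exact: sum_inv_powR_ge.
have Mn := bigmin_mul_sum_le (m 0%N) (fun j : 'I_k.+1 => m j) (fun j => w_ge0 j).
have wm : \sum_(j < k.+1) w j * m j = 2 * \sum_(j < k.+1) w j / 2 * m j.
  by rewrite mulr_sumr; apply: eq_bigr => j _; field.
have min_ge0 : 0 <= \big[Order.min/m 0%N]_(j < k.+1) m j.
  by apply: le_bigmin.
apply: le_trans (ler_wpM2l min_ge0 sumw) _; apply: le_trans Mn _.
rewrite wm; have := fv_ge k.+1; lra.
Qed.

Lemma descent_rate (k : nat) :
  \big[Order.min/m 0%N]_(j < k.+1) m j
    <= 2 * c * (fv 0%N - f_inf) / ((1 - zeta) * k.+1%:R `^ (1 - zeta))
       + 2 * c * Y / ((1 - zeta) * (1 - beta) * k.+1%:R `^ (beta - zeta)).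
Proof.
set P1 := k.+1%:R `^ (1 - zeta); set P2 := k.+1%:R `^ (beta - zeta).
have P1_gt0 : 0 < P1 by rewrite powR_gt0 ?ltr0n.
have P2_gt0 : 0 < P2 by rewrite powR_gt0 ?ltr0n.
have P12 : k.+1%:R `^ (1 - beta) = P1 / P2.
  by rewrite -powRB ?pnatr_eq0 ?implybT //; congr powR; ring.
have := descent_bigmin_sum k; rewrite P12 -ler_pdivlMr ?divr_gt0 //.
move/le_trans; apply.
have z1 : 0 < 1 - zeta by rewrite subr_gt0.
have b1 : 0 < 1 - beta by rewrite subr_gt0.
have A0 : 0 <= fv 0%N - f_inf by rewrite subr_ge0.
(* the right-hand side is the bound just obtained, multiplied by 1 / (1 - zeta) >= 1 *)
rewrite -subr_ge0.
have -> : 2 * c * (fv 0%N - f_inf) / ((1 - zeta) * P1)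
      + 2 * c * Y / ((1 - zeta) * (1 - beta) * P2)
      - (2 * (fv 0%N - f_inf) + 2 * Y * (P1 / P2 / (1 - beta))) / (P1 / c)
    = (2 * c * (fv 0%N - f_inf) / P1 + 2 * c * Y / ((1 - beta) * P2))
      * (zeta / (1 - zeta)).
  by field; rewrite !gt_eqF.
have c2 : 0 <= 2 * c by rewrite mulr_ge0 // ltW.
apply: mulr_ge0; last by rewrite divr_ge0 // ltW.
by rewrite addr_ge0 // divr_ge0 ?mulr_ge0 // ltW.
Qed.

End DescentRate.

Theorem theorem2 (R : realType) (n : nat)
  (F : 'rV[R]_n -> R) (h : 'rV[R]_n -> \bar R) (f_inf : R)
  (q rho L delta beta zeta : R)
  (x g : nat -> 'rV[R]_n) :
  proper_fun h -> elsc h -> convex_efun h ->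
  lsc F ->
  (forall y, (h y < +oo)%E -> ((F y)%:E + h y >= f_inf%:E)%E) ->
  0 <= q < 2 -> 0 < rho -> 0 < L -> 0 <= delta ->
  0 <= beta < 1 -> 0 <= zeta < 1 ->
  let delta_k := fun k : nat => delta / powR (k.+1)%:R (beta * (2 - q) / 2) in
  let alpha_k := fun k : nat => 1 / ((L + q * rho) * powR (k.+1)%:R zeta) in
  (h (x 0%N) < +oo)%E ->
  (forall k, is_prox h (alpha_k k) (x k - alpha_k k *: g k) (x k.+1)) ->
  (forall k y, (h y < +oo)%E ->
     F y - (F (x k) + dotv (g k) (y - x k))
       <= L / 2 * enorm (y - x k) ^+ 2 + delta_k k * powR (enorm (y - x k)) q) ->
  (* p (j+1) = -(1/alpha_j)(x_{j+1} - x_j) - g_j *)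
  let p := fun i : nat => - (1 / alpha_k i.-1) *: (x i - x i.-1) - g i.-1 in
  forall k : nat,
    \big[Order.min/ enorm (g 0%N + p 1%N) ^+ 2]_(j < k.+1) (enorm (g j + p j.+1) ^+ 2)
    <= 2 * (L + q * rho) * (F (x 0%N) + fine (h (x 0%N)) - f_inf)
         / ((1 - zeta) * powR (k.+1)%:R (1 - zeta))
       + (2 - q) * (L + q * rho) * powR delta (2 / (2 - q))
         / ((1 - zeta) * (1 - beta) * powR rho (q / (2 - q))
            * powR (k.+1)%:R (beta - zeta)).

Proof.
move=> h_proper _ h_convex _ f_ge q_range rho0 L0 delta0 /andP[b0 b1] /andP[z0 z1].
move=> delta_k alpha_k hx0 hprox oracle p k.
have [q0 q2] := andP q_range.
set c := L + q * rho.
have c_gt0 : 0 < c by have := mulr_ge0 q0 (ltW rho0); rewrite /c; lra.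
have P_gt0 j : 0 < j.+1%:R `^ zeta by rewrite powR_gt0 ?ltr0n.
have alphaE j : alpha_k j = (c * j.+1%:R `^ zeta)^-1 by rewrite /alpha_k div1r.
have alpha_gt0 j : 0 < alpha_k j by rewrite alphaE invr_gt0 mulr_gt0.
have alpha_c j : alpha_k j * c <= 1.
  by rewrite alphaE invfM mulrAC mulVf ?gt_eqF // mul1r invf_le1 // powR_ge1 ?ler1n.
have delta_ge0 j : 0 <= delta_k j by rewrite divr_ge0 ?powR_ge0.
have dom j : (h (x j) < +oo)%E by case: j => [|j] //; case: (hprox j).
have fv_ge j : f_inf <= F (x j) + fine (h (x j)).
  by rewrite -lee_fin EFinD fineK_dom // f_ge.
have descent j : F (x j.+1) + fine (h (x j.+1))
      + (c * j.+1%:R `^ zeta)^-1 / 2 * enorm (g j + p j.+1) ^+ 2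
    <= F (x j) + fine (h (x j)) + young_const q rho delta / j.+1%:R `^ beta.
  have := prox_grad_descent h_proper h_convex q_range rho0 (alpha_gt0 j) (alpha_c j)
    (delta_ge0 j) (dom j) (hprox j) (oracle j).
  by rewrite young_const_div ?ltr0n // /p /= (addrC (g j)) subrK div1r -alphaE.
have := descent_rate c_gt0 b0 b1 z0 z1 (young_const_ge0 rho delta q2) fv_ge
  (fun j => sqr_ge0 _) descent k.
suff -> : (2 - q) * c * powR delta (2 / (2 - q))
    / ((1 - zeta) * (1 - beta) * powR rho (q / (2 - q)) * powR k.+1%:R (beta - zeta))
  = 2 * c * young_const q rho delta
    / ((1 - zeta) * (1 - beta) * powR k.+1%:R (beta - zeta)) by [].
by rewrite /young_const; field; rewrite !gt_eqF ?powR_gt0 ?ltr0n ?subr_gt0.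
Qed.
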